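(* On the half-duplex $(a,b,c)$-relay channel, static QMF achieves the full-duplex DMT $d_{f.d.}(r)=(\min(a,b)-r)^++(c-r)^+$ (and is therefore DMT optimal) in each of the following cases: (i) $c\ge\min(a,b)$ (for all $r\ge 0$); (ii) $c<\min(a,b)$ and $0\le r\le c$. That is, in these cases $d_{QMF}(r)=d_{f.d.}(r)$.
   Context: The $(a,b,c)$-relay channel: source $S$, relay $R$, destination $D$; i.i.d. $\mathcal{CN}(0,1)$ quasi-static gains $h_{sr},h_{rd},h_{sd}$ known only at receivers; average SNRs $\rho^a,\rho^b,\rho^c$ on S-R, R-D, S-D. Exponential orders $\alpha,\beta,\gamma$ of $|h_{sr}|^2\rho^a,|h_{rd}|^2\rho^b,|h_{sd}|^2\rho^c$ (e.g. $\alpha=\lim_{\rho\to\infty}\log(1+|h_{sr}|^2\rho^a)/\log\rho$). The full-duplex DMT is $d_{f.d.}(r)=\min\{a+b+c-\alpha-\beta-\gamma:\min(\max(\alpha,\gamma),\max(\beta,\gamma))\le r,\ \alpha\in[0,a],\beta\in[0,b],\gamma\in[0,c]\}$, an upper bound on the half-duplex DMT. Static QMF (relay listens half the time, quantizes at noise level, maps to a random codeword and transmits in the other half, fixed schedule) has DMT $d_{QMF}(r)=\min\{a+b+c-\alpha-\beta-\gamma: r_{h.d.}(1/2)\le r,\ \alpha\in[0,a],\beta\in[0,b],\gamma\in[0,c]\}$ where $r_{h.d.}(t)=\min\{t\max(\alpha,\gamma)+(1-t)\gamma,\ t\gamma+(1-t)\max(\beta,\gamma)\}$. $x^+=\max(x,0)$.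 *)

From Stdlib Require Import Reals Lra.
Open Scope R_scope.

Definition posp (x : R) : R := Rmax x 0.

Definition is_min3 (P : R -> R -> R -> Prop) (f : R -> R -> R -> R) (v : R) : Prop :=
  (exists al be ga, P al be ga /\ f al be ga = v) /\
  (forall al be ga, P al be ga -> v <= f al be ga).

Definition dmt_obj (a b c : R) (al be ga : R) : R := a + b + c - al - be - ga.

Definition in_box (a b c al be ga : R) : Prop :=
  0 <= al <= a /\ 0 <= be <= b /\ 0 <= ga <= c.

Definition r_hd (t al be ga : R) : R :=
  Rmin (t * Rmax al ga + (1 - t) * ga) (t * ga + (1 - t) * Rmax be ga).

Definition fd_feasible (a b c r al be ga : R) : Prop :=
  in_box a b c al be ga /\ Rmin (Rmax al ga) (Rmax be ga) <= r.

Definition qmf_feasible (a b c r al be ga : R) : Prop :=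
  in_box a b c al be ga /\ r_hd (1/2) al be ga <= r.

Definition d_fd_is (a b c r v : R) : Prop :=
  is_min3 (fd_feasible a b c r) (dmt_obj a b c) v.

Definition d_QMF_is (a b c r v : R) : Prop :=
  is_min3 (qmf_feasible a b c r) (dmt_obj a b c) v.

(* Both DMTs are minima of the same objective a+b+c-alpha-beta-gamma over the
   box [0,a]x[0,b]x[0,c]; only the outage constraint differs.  Since
   r_hd(t) <= min(max(alpha,gamma), max(beta,gamma)) for t in [0,1], the
   full-duplex feasible set is contained in the QMF one.  Hence it suffices
   (lemma [is_min3_sandwich]) to exhibit one full-duplex feasible point with
   objective value d(r) ([fd_witness]) and to show that d(r) bounds the
   objective from below on the larger QMF set ([qmf_lower_bound]).  The
   latter reduces, branch by branch of the minimum in r_hd(1/2), to an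
   elementary inequality ([branch_lower_bound]); this is the only place where
   the hypothesis on c is used, in the equivalent form min(a,b) <= c \/ r <= c. *)

From Stdlib Require Import Reals Lra.
Open Scope R_scope.

Lemma is_min3_sandwich (P Q : R -> R -> R -> Prop) (f : R -> R -> R -> R) (v : R) :
  (forall al be ga, P al be ga -> Q al be ga) ->
  (exists al be ga, P al be ga /\ f al be ga = v) ->
  (forall al be ga, Q al be ga -> v <= f al be ga) ->
  is_min3 P f v /\ is_min3 Q f v.
Proof.
  intros HPQ [al [be [ga [HP Hv]]]] Hlow.
  split; split.
  - exists al, be, ga; auto.
  - intros x y z Hxyz; apply Hlow, HPQ, Hxyz.
  - exists al, be, ga; auto.
  - exact Hlow.
Qed.

Lemma sub_Rmin_posp (x r : R) : x - Rmin x r = posp (x - r).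
Proof.
  unfold posp, Rmin, Rmax.
  destruct (Rle_dec x r); destruct (Rle_dec (x - r) 0); lra.
Qed.

(* Each branch of r_hd(t) is a convex combination of max(x,ga) and ga, hence
   at most max(x,ga); so the half-duplex rate never exceeds the full-duplex one. *)
Lemma r_hd_le_fd (t al be ga : R) :
  0 <= t <= 1 ->
  r_hd t al be ga <= Rmin (Rmax al ga) (Rmax be ga).
Proof.
  intros Ht; unfold r_hd.
  assert (Hag : ga <= Rmax al ga) by apply Rmax_r.
  assert (Hbg : ga <= Rmax be ga) by apply Rmax_r.
  apply Rmin_glb.
  - eapply Rle_trans; [apply Rmin_l|]; nra.
  - eapply Rle_trans; [apply Rmin_r|]; nra.
Qed.

Lemma fd_feasible_qmf (a b c r al be ga : R) :
  fd_feasible a b c r al be ga -> qmf_feasible a b c r al be ga.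
Proof.
  intros [Hbox Hout]; split; [exact Hbox|].
  eapply Rle_trans; [apply r_hd_le_fd; lra | exact Hout].
Qed.

(* The full-duplex DMT is attained: clip the gain of the weaker hop and of the
   direct link at r, and leave the stronger hop at its maximum. *)
Lemma fd_witness (a b c r : R) :
  0 <= a -> 0 <= b -> 0 <= c -> 0 <= r ->
  exists al be ga, fd_feasible a b c r al be ga /\
    dmt_obj a b c al be ga = posp (Rmin a b - r) + posp (c - r).
Proof.
  intros Ha Hb Hc Hr.
  assert (Hga : 0 <= Rmin c r <= c /\ Rmin c r <= r).
  { split; [split|]; [apply Rmin_glb; lra | apply Rmin_l | apply Rmin_r]. }
  assert (Hclip : forall x, 0 <= x -> 0 <= Rmin x r <= x /\ Rmax (Rmin x r) (Rmin c r) <= r).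
  { intros x Hx; split; [split; [apply Rmin_glb; lra | apply Rmin_l]|].
    apply Rmax_lub; [apply Rmin_r | lra]. }
  destruct (Rle_or_lt a b) as [Hab | Hba].
  - destruct (Hclip a Ha) as [Hal Hout].
    exists (Rmin a r), b, (Rmin c r); split.
    + split; [repeat split; lra|].
      eapply Rle_trans; [apply Rmin_l | exact Hout].
    + rewrite (Rmin_left a b) by lra; unfold dmt_obj.
      rewrite <- !sub_Rmin_posp; ring.
  - destruct (Hclip b Hb) as [Hbe Hout].
    exists a, (Rmin b r), (Rmin c r); split.
    + split; [repeat split; lra|].
      eapply Rle_trans; [apply Rmin_r | exact Hout].
    + rewrite (Rmin_right a b) by lra; unfold dmt_obj.
      rewrite <- !sub_Rmin_posp; ring.
Qed.

Lemma half_branch_le (x ga r : R) :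
  1 / 2 * Rmax x ga + (1 - 1 / 2) * ga <= r -> x + ga <= 2 * r /\ ga <= r.
Proof.
  intros H.
  assert (Hx : x <= Rmax x ga) by apply Rmax_l.
  assert (Hg : ga <= Rmax x ga) by apply Rmax_r.
  lra.
Qed.

(* The hypothesis
   m <= c \/ r <= c is needed: for c < r < m the point ga = c, al = e = m
   (admissible when m + c <= 2r) leaves exponent 0 < m - r. *)
Lemma branch_lower_bound (m e c r al ga : R) :
  m <= e -> al <= e -> ga <= c ->
  al + ga <= 2 * r -> ga <= r ->
  (m <= c \/ r <= c) ->
  posp (m - r) + posp (c - r) <= (e - al) + (c - ga).
Proof.
  intros Hme Hal Hgc Hsum Hgr Hcase; unfold posp.
  destruct (Rle_or_lt r c) as [Hrc | Hcr].
  - rewrite (Rmax_left (c - r) 0) by lra.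
    assert (Hm : Rmax (m - r) 0 <= e - al + r - ga) by (apply Rmax_lub; lra).
    lra.
  - assert (Hmc : m <= c) by (destruct Hcase; lra).
    rewrite (Rmax_right (m - r) 0), (Rmax_right (c - r) 0) by lra.
    lra.
Qed.

Lemma qmf_lower_bound (a b c r al be ga : R) :
  (Rmin a b <= c \/ r <= c) ->
  qmf_feasible a b c r al be ga ->
  posp (Rmin a b - r) + posp (c - r) <= dmt_obj a b c al be ga.
Proof.
  intros Hcase [[Hal [Hbe Hga]] Hout]; unfold r_hd in Hout; unfold dmt_obj.
  set (m := Rmin a b).
  assert (Hma : m <= a) by apply Rmin_l.
  assert (Hmb : m <= b) by apply Rmin_r.
  destruct (Rle_or_lt (1 / 2 * Rmax al ga + (1 - 1 / 2) * ga)
                      (1 / 2 * ga + (1 - 1 / 2) * Rmax be ga)) as [Hsel | Hsel].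
  - rewrite Rmin_left in Hout by lra.
    destruct (half_branch_le al ga r Hout) as [Hsum Hgr].
    pose proof (branch_lower_bound m a c r al ga Hma ltac:(lra) ltac:(lra) Hsum Hgr Hcase).
    lra.
  - rewrite Rmin_right in Hout by lra.
    assert (Hout' : 1 / 2 * Rmax be ga + (1 - 1 / 2) * ga <= r) by lra.
    destruct (half_branch_le be ga r Hout') as [Hsum Hgr].
    pose proof (branch_lower_bound m b c r be ga Hmb ltac:(lra) ltac:(lra) Hsum Hgr Hcase).
    lra.
Qed.

Theorem corollary1 (a b c r : R) :
  0 <= a -> 0 <= b -> 0 <= c -> 0 <= r ->
  (Rmin a b <= c \/ (c < Rmin a b /\ r <= c)) ->
  d_fd_is a b c r (posp (Rmin a b - r) + posp (c - r)) /\
  d_QMF_is a b c r (posp (Rmin a b - r) + posp (c - r)).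
Proof.
  intros Ha Hb Hc Hr Hcase.
  assert (Hcase' : Rmin a b <= c \/ r <= c) by (destruct Hcase; [left | right]; lra).
  apply is_min3_sandwich.
  - apply fd_feasible_qmf.
  - apply fd_witness; assumption.
  - intros al be ga; apply qmf_lower_bound, Hcase'.
Qed.
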